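(* Let $n\ge 0$ and let $F\colon X\to Y$ be a multivalued mapping which is lower $n$-continuous. Then $F$ is lower polyhedrally $n$-continuous.
   Context: A multivalued mapping $F\colon X\to Y$ assigns to each $x\in X$ a subset $F(x)\subset Y$. $F$ is lower $n$-continuous if for any $x\in X$, $y\in F(x)$ and any neighborhood $V$ of $y$ in $Y$ there exist neighborhoods $W$ of $y$ in $Y$ and $U$ of $x$ in $X$ such that for every $x'\in U$ and every $k$ with $-1\le k\le n-1$, every continuous map $S^k\to W\cap F(x')$ is homotopic to a constant map in $V\cap F(x')$ (for $k=-1$, with $S^{-1}=\emptyset$, this means $V\cap F(x')\neq\emptyset$). A pair of spaces $V'\subset U'$ is polyhedrally $n$-connected if for every finite polyhedron $P$ of dimension at most $n$ and every closed subpolyhedron $A\subset P$, every continuous map $A\to V'$ extends to a continuous map $P\to U'$. $F$ is lower polyhedrally $n$-continuous if for any $x\in X$, $y\in F(x)$ and any neighborhood $V$ of $y$ in $Y$ there exist neighborhoods $W$ of $y$ in $Y$ and $U$ of $x$ in $X$ such that the pair $W\cap F(x')\subset V\cap F(x')$ is polyhedrally $n$-connected for every $x'\in U$. *)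

From HB Require Import structures.
From mathcomp Require Import all_boot all_order all_algebra.
From mathcomp Require Import all_classical all_reals all_analysis.
From mathcomp Require Import Rstruct Rstruct_topology.
Unset Strict Implicit. Unset Printing Implicit Defensive.
Import Order.TTheory GRing.Theory Num.Theory.
Local Open Scope classical_set_scope.
Local Open Scope ring_scope.

Notation RR := Rdefinitions.R.

Definition unit_sphere (k : nat) : set 'rV[RR]_k.+1 :=
  [set v | \sum_(i < k.+1) (v ord0 i) ^+ 2 = 1].

Definition unit_interval : set RR := [set t | 0 <= t <= 1].

(* A map f : S^k -> Y (given on the ambient space, only its restriction to S^k
   matters) is homotopic, inside S, to a constant map. *)
Definition nullhomotopic_in {Y : topologicalType} (k : nat) (S : set Y)
    (f : 'rV[RR]_k.+1 -> Y) : Prop :=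
  exists (H : RR * 'rV[RR]_k.+1 -> Y) (c : Y),
    {within (unit_interval `*` (unit_sphere k)), continuous H} /\
    H @` ((unit_interval `*` (unit_sphere k))) `<=` S /\
    (forall v, unit_sphere k v -> H (0, v) = f v /\ H (1, v) = c).

(* Lower n-continuity of a multivalued mapping F : X -> 2^Y.  The case
   k = -1 (S^{-1} = empty) is the nonemptiness of V \cap F(x'); the cases
   0 <= k <= n-1 are the spheres S^k. *)
Definition lower_n_continuous {X Y : topologicalType} (n : nat)
    (F : X -> set Y) : Prop :=
  forall (x : X) (y : Y), F x y ->
  forall V : set Y, nbhs y V ->
  exists (W : set Y) (U : set X), nbhs y W /\ nbhs x U /\
    forall x', U x' ->
      (V `&` F x' !=set0) /\
      (forall k : nat, (k < n)%N ->
         forall f : 'rV[RR]_k.+1 -> Y,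
           {within unit_sphere k, continuous f} ->
           f @` unit_sphere k `<=` W `&` F x' ->
           nullhomotopic_in k (V `&` F x') f).

Definition simplicial_complex {m : nat} (K : {set {set 'I_m}}) : Prop :=
  forall s t : {set 'I_m}, s \in K -> t \subset s -> t \in K.

Definition complex_dim_le {m : nat} (n : nat) (K : {set {set 'I_m}}) : Prop :=
  forall s, s \in K -> (#|s| <= n.+1)%N.

(* Geometric realization |K| in R^m (standard realization: barycentric
   coordinates whose support is a face of K). *)
Definition realization {m : nat} (K : {set {set 'I_m}}) : set 'rV[RR]_m :=
  [set x : 'rV[RR]_m | (forall i, 0 <= x ord0 i) /\ \sum_(i < m) x ord0 i = 1 /\
           [set i : 'I_m | x ord0 i != 0]%SET \in K].

Definition polyhedrally_n_connected {Y : topologicalType} (n : nat)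
    (V' U' : set Y) : Prop :=
  forall (m : nat) (K L : {set {set 'I_m}}),
    simplicial_complex K -> complex_dim_le n K ->
    simplicial_complex L -> L \subset K ->
    forall g : 'rV[RR]_m -> Y,
      {within realization L, continuous g} ->
      g @` realization L `<=` V' ->
      exists h : 'rV[RR]_m -> Y,
        {within realization K, continuous h} /\
        h @` realization K `<=` U' /\
        (forall a, realization L a -> h a = g a).

Definition lower_polyhedrally_n_continuous {X Y : topologicalType} (n : nat)
    (F : X -> set Y) : Prop :=
  forall (x : X) (y : Y), F x y ->
  forall V : set Y, nbhs y V ->
  exists (W : set Y) (U : set X), nbhs y W /\ nbhs x U /\
    forall x', U x' ->
      polyhedrally_n_connected n (W `&` F x') (V `&` F x').

From HB Require Import structures.
From mathcomp Require Import all_boot all_order all_algebra.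
From mathcomp Require Import all_classical all_reals all_analysis.
From mathcomp Require Import Rstruct Rstruct_topology.
From mathcomp Require Import ring lra.
Import Order.TTheory GRing.Theory Num.Theory.
Local Open Scope classical_set_scope.
Local Open Scope ring_scope.

(* Induction on the number c of vertices of the faces.  Given V, lower
   n-continuity provides W1, and the induction hypothesis applied to W1 ∩ V
   provides W ⊆ W1 ∩ V: a map from a subcomplex into W ∩ F(x') first extends
   over the faces with at most c vertices, into W1 ∩ V ∩ F(x'), and then over
   the remaining faces one at a time.  On a face with k+2 vertices, radial
   projection from the barycentre identifies its boundary with S^k; lower
   n-continuity contracts the resulting sphere map inside V ∩ F(x'), and
   running the contraction along the radial coordinate of the face (a cone
   construction) extends the map over the face.  Faces with a single vertex
   only need V ∩ F(x') to be nonempty. *)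

Set Implicit Arguments.

Lemma within_continuous_comp (T U Z : topologicalType) (A : set T) (B : set U)
    (f : T -> U) (g : U -> Z) :
  {within A, continuous f} -> (forall a, A a -> B (f a)) ->
  {within B, continuous g} -> {within A, continuous (g \o f)}.
Proof.
move=> cf fAB cg; apply/subspace_continuousP => x Ax W /= Wn.
have := proj1 (subspace_continuousP B g) cg (f x) (fAB x Ax) W Wn.
move=> /(proj1 (subspace_continuousP A f) cf x Ax).
rewrite /= /within /= !nbhs_simpl /=.
by apply: filterS => a /= H Aa; exact: H Aa (fAB a Aa).
Qed.

Lemma continuous_row_at (T : topologicalType) n (F : T -> 'I_n -> RR) x :
  (forall j, {for x, continuous (fun a => F a j)}) ->
  {for x, continuous (fun a => \row_j F a j : 'rV[RR]_n)}.
Proof.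
move=> cF.
have -> : (fun a => \row_j F a j) =
          (fun a => \sum_(j < n) F a j *: (delta_mx 0 j : 'rV[RR]_n)).
  apply/funext => a; apply/rowP => j; rewrite mxE summxE (bigD1 j) //= big1.
    by rewrite !mxE !eqxx mulr1 addr0.
  by move=> i ij; rewrite !mxE eq_sym (negbTE ij) andbF mulr0.
apply: cvg_big => //; first exact: add_continuous.
by move=> j _; exact: continuousZr_tmp.
Qed.

Lemma continuous_row_sum m : continuous (fun a : 'rV[RR]_m => \sum_(i < m) a ord0 i).
Proof.
apply: continuous_big => [|i _]; first exact: (@add_continuous RR^o).
exact: coord_continuous.
Qed.

Lemma maxR_continuous : continuous (fun z : RR * RR => Num.max z.1 z.2).
Proof. by move=> z; apply: (@continuous_max _ _ fst snd); [exact: cvg_fst|exact: cvg_snd]. Qed.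

Section simplex_gauge.
Variable k : nat.
Implicit Types v : 'rV[RR]_k.+1.

(* Identifies R^(k+1) with the hyperplane [sum u = 0] of R^(k+2). *)
Definition zero_sum_lift v (i : 'I_k.+2) : RR :=
  if (i < k.+1)%N then v ord0 (inord i) else - \sum_(j < k.+1) v ord0 j.

(* The Minkowski gauge, in that hyperplane, of the simplex [u_i >= -1]; it is
   (k+2) times the barycentre-centred standard simplex. *)
Definition simplex_gauge v : RR :=
  \big[Num.max/0]_(i < k.+2) (- zero_sum_lift v i).

Lemma zero_sum_lift_widen v (j : 'I_k.+1) :
  zero_sum_lift v (widen_ord (leqnSn _) j) = v ord0 j.
Proof.
by rewrite /zero_sum_lift /= ltn_ord; congr (v _ _); apply: val_inj; rewrite /= inordK.
Qed.

Lemma zero_sum_lift_max v : zero_sum_lift v ord_max = - \sum_(j < k.+1) v ord0 j.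
Proof. by rewrite /zero_sum_lift /= ltnn. Qed.

Lemma sum_zero_sum_lift v : \sum_(i < k.+2) zero_sum_lift v i = 0.
Proof.
rewrite big_ord_recr /= zero_sum_lift_max.
by under eq_bigr do rewrite zero_sum_lift_widen; rewrite subrr.
Qed.

Lemma zero_sum_liftZ (c : RR) v i : zero_sum_lift (c *: v) i = c * zero_sum_lift v i.
Proof.
rewrite /zero_sum_lift; case: ifP => _; first by rewrite mxE.
by rewrite mulrN mulr_sumr; congr (- _); apply: eq_bigr => j _; rewrite mxE.
Qed.

Lemma continuous_zero_sum_lift i : continuous (zero_sum_lift ^~ i).
Proof.
rewrite /zero_sum_lift; case: (i < k.+1)%N; first exact: coord_continuous.
by move=> v; apply: (@continuousN _ RR^o); exact: continuous_row_sum.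
Qed.

Lemma simplex_gauge_ge v i : - zero_sum_lift v i <= simplex_gauge v.
Proof. by rewrite /simplex_gauge (bigD1 i) //= le_max lexx. Qed.

Lemma simplex_gauge_ge0 v : 0 <= simplex_gauge v.
Proof.
by rewrite /simplex_gauge; elim/big_rec: _ => //= i x _ hx; rewrite le_max hx orbT.
Qed.

Lemma simplex_gauge_attained v :
  simplex_gauge v = 0 \/ exists i, simplex_gauge v = - zero_sum_lift v i.
Proof.
rewrite /simplex_gauge; elim/big_ind: _ => [| x y hx hy |i _]; [by left| |by right; exists i].
by rewrite /Num.max; case: ifP.
Qed.

Lemma simplex_gaugeZ (c : RR) v : 0 <= c -> simplex_gauge (c *: v) = c * simplex_gauge v.
Proof.
move=> c0; rewrite /simplex_gauge (big_morph (fun x => c * x) (id1 := 0) (op1 := Num.max)).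
- by apply: eq_bigr => i _; rewrite zero_sum_liftZ mulrN.
- by move=> x y; rewrite maxr_pMr.
- by rewrite mulr0.
Qed.

Lemma simplex_gauge0 : simplex_gauge 0 = 0.
Proof. by rewrite -(scale0r (0 : 'rV[RR]_k.+1)) simplex_gaugeZ // mul0r. Qed.

Lemma simplex_gauge_gt0 v : v != 0 -> 0 < simplex_gauge v.
Proof.
move=> v0; have [[i hi]|no] := pselect (exists i, zero_sum_lift v i < 0).
  by rewrite -oppr_gt0 in hi; exact: lt_le_trans hi (simplex_gauge_ge v i).
have lift_ge0 i : 0 <= zero_sum_lift v i.
  by rewrite leNgt; apply/negP => hi; apply: no; exists i.
have lift0 := psumr_eq0P (P := predT) (fun i _ => lift_ge0 i) (sum_zero_sum_lift v).
by case/negP: v0; apply/eqP/rowP => j; rewrite mxE -zero_sum_lift_widen lift0.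
Qed.

Lemma continuous_simplex_gauge : continuous simplex_gauge.
Proof.
apply: continuous_big => [|i _]; first exact: maxR_continuous.
by move=> v; apply: (@continuousN _ RR^o); exact: continuous_zero_sum_lift.
Qed.

End simplex_gauge.

Definition euclid_norm n (v : 'rV[RR]_n) : RR := Num.sqrt (\sum_j v ord0 j ^+ 2).

Lemma sum_sqr_row_eq0 n (v : 'rV[RR]_n) : \sum_j v ord0 j ^+ 2 = 0 -> v = 0.
Proof.
move=> S0; apply/rowP => j.
have := psumr_eq0P (P := predT) (fun j _ => sqr_ge0 (v ord0 j)) S0 (i := j) isT.
by move/eqP; rewrite sqrf_eq0 mxE => /eqP.
Qed.

Lemma euclid_norm_gt0 n (v : 'rV[RR]_n) : v != 0 -> 0 < euclid_norm v.
Proof.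
move=> v0; rewrite /euclid_norm sqrtr_gt0 lt_def sumr_ge0 ?andbT => [|j _].
  by apply: contra v0 => /eqP /sum_sqr_row_eq0 ->.
exact: sqr_ge0.
Qed.

Lemma continuous_euclid_norm n : continuous (@euclid_norm n).
Proof.
move=> v; apply: continuous_comp; last exact: sqrt_continuous.
apply: continuous_big => [|j _]; first exact: (@add_continuous RR^o).
by move=> w; have cj := @coord_continuous RR 1 n ord0 j w; exact: (continuousM cj cj).
Qed.

Lemma unit_sphere_normalize k (v : 'rV[RR]_k.+1) :
  v != 0 -> unit_sphere k ((euclid_norm v)^-1 *: v).
Proof.
move=> v0; rewrite /unit_sphere /=.
set S := \sum_(j < k.+1) v ord0 j ^+ 2.
have S0 : 0 <= S by apply: sumr_ge0 => j _; exact: sqr_ge0.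
have Sn0 : S != 0 by apply: contra v0 => /eqP /sum_sqr_row_eq0 ->.
under eq_bigr do rewrite mxE exprMn.
by rewrite -mulr_sumr -/S /euclid_norm -/S exprVn sqr_sqrtr // mulVf.
Qed.

Lemma unit_sphere_neq0 k (v : 'rV[RR]_k.+1) : unit_sphere k v -> v != 0.
Proof.
apply: contraPneq => -> /=; rewrite /unit_sphere /=.
under eq_bigr do rewrite mxE expr0n /=.
by rewrite big1 // => /esym/eqP; rewrite oner_eq0.
Qed.

Lemma unit_sphere_delta k : unit_sphere k (delta_mx 0 ord0).
Proof.
rewrite /unit_sphere /= (bigD1 ord0) //= big1 => [|j jn].
  by rewrite !mxE eqxx expr1n addr0.
by rewrite !mxE eqxx /= (negbTE jn) expr0n.
Qed.

Definition row_support m (a : 'rV[RR]_m) : {set 'I_m} := [set i | a ord0 i != 0]%SET.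

Definition simplex m (s : {set 'I_m}) : set 'rV[RR]_m :=
  [set a : 'rV[RR]_m |
    (forall i, 0 <= a ord0 i) /\ \sum_(i < m) a ord0 i = 1 /\ row_support a \subset s].

Definition simplex_boundary m (s : {set 'I_m}) : set 'rV[RR]_m :=
  [set a : 'rV[RR]_m | simplex s a /\ row_support a != s].

Lemma row_support_out m (a : 'rV[RR]_m) (s : {set 'I_m}) t :
  row_support a \subset s -> t \notin s -> a ord0 t = 0.
Proof.
move=> /fintype.subsetP sub; apply: contraNeq => at0.
by apply: sub; rewrite inE.
Qed.

Lemma row_support_neq0 m (a : 'rV[RR]_m) :
  \sum_(i < m) a ord0 i = 1 -> row_support a != finset.set0.
Proof.
apply: contraPneq => s0; rewrite big1 => [/esym/eqP|i _]; first by rewrite oner_eq0.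
have : i \notin row_support a by rewrite s0 finset.in_set0.
by rewrite inE negbK => /eqP.
Qed.

Lemma closed_simplex m (s : {set 'I_m}) : closed (simplex s).
Proof.
have closed_coord i (C : set RR) : closed C -> closed ((fun a : 'rV[RR]_m => a ord0 i) @^-1` C).
  by apply: (proj1 (continuous_closedP _)); exact: coord_continuous.
have -> : simplex s =
   ((\bigcap_(i in [set: 'I_m]) ((fun a : 'rV[RR]_m => a ord0 i) @^-1` [set x | 0 <= x]))
   `&` (\bigcap_(i in [set i | i \notin s]) ((fun a : 'rV[RR]_m => a ord0 i) @^-1` [set 0])))
   `&` (fun a : 'rV[RR]_m => \sum_(i < m) a ord0 i) @^-1` [set 1].
  apply/seteqP; split => [a [a0 [a1 sub]]|a [[a0 as0] a1]].
    by split=> //; split=> i //= ins; exact: row_support_out sub ins.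
  split; first by move=> i; exact: a0.
  split=> //; apply/fintype.subsetP => i; rewrite inE; apply: contraR => ins.
  by rewrite (as0 i ins) eqxx.
apply: closedI; last first.
  by apply: (proj1 (continuous_closedP _) (@continuous_row_sum m)); exact: closed_eq.
by apply: closedI; apply: closed_bigI => i _; apply: closed_coord;
  [exact: closed_ge|exact: closed_eq].
Qed.

Definition enumerates m k (e : 'I_k.+2 -> 'I_m) (s : {set 'I_m}) : Prop :=
  injective e /\ forall t, t \in s <-> exists i, e i = t.

Lemma enumerates_card m (s : {set 'I_m}) k :
  #|s| = k.+2 -> exists e : 'I_k.+2 -> 'I_m, enumerates e s.
Proof.
move=> hs; exists (fun i => enum_val (cast_ord (esym hs) i)); split.
  by move=> i j /enum_val_inj /cast_ord_inj.
move=> t; split => [ts|[i <-]]; last exact: enum_valP.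
exists (cast_ord hs (enum_rank_in ts t)).
by rewrite cast_ordK (enum_rankK_in ts ts).
Qed.

Lemma ord_widen_or_max k (i : 'I_k.+2) :
  (exists j : 'I_k.+1, i = widen_ord (leqnSn _) j) \/ i = ord_max.
Proof.
case: (ltnP i k.+1) => h; first by left; exists (Ordinal h); apply: val_inj.
by right; apply: val_inj => /=; apply/eqP; rewrite eqn_leq h -ltnS ltn_ord.
Qed.

Definition bary k : RR := (k.+2)%:R^-1.

Lemma bary_gt0 k : 0 < bary k.
Proof. by rewrite /bary invr_gt0 ltr0n. Qed.

Lemma natr_bary k : (k.+2)%:R * bary k = 1.
Proof. by rewrite /bary mulfV // pnatr_eq0. Qed.

Section barycentric_chart.
Variables (m k : nat) (e : 'I_k.+2 -> 'I_m) (s : {set 'I_m}).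
Hypothesis es : enumerates e s.
Implicit Types (a : 'rV[RR]_m) (v : 'rV[RR]_k.+1).

(* Centred at the barycentre, the simplex on [s] becomes the set of gauge at
   most [bary k]; the coordinate along [e ord_max] is dropped, being
   determined by the others. *)
Definition centred_chart (a : 'rV[RR]_m) : 'rV[RR]_k.+1 :=
  \row_(j < k.+1) (a ord0 (e (widen_ord (leqnSn _) j)) - bary k).

Definition radial (a : 'rV[RR]_m) : RR := (k.+2)%:R * simplex_gauge (centred_chart a).

Definition sphere_chart (a : 'rV[RR]_m) : 'rV[RR]_k.+1 :=
  (euclid_norm (centred_chart a))^-1 *: centred_chart a.

(* The point of the boundary in the direction [v] seen from the barycentre. *)
Definition sphere_to_boundary (v : 'rV[RR]_k.+1) : 'rV[RR]_m :=
  \row_(t < m) \sum_(i < k.+2 | e i == t)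
     (bary k + bary k * zero_sum_lift v i / simplex_gauge v).

Lemma sum_fibre_inj (F : 'I_k.+2 -> RR) j : \sum_(i < k.+2 | e i == e j) F i = F j.
Proof.
by rewrite (eq_bigl (pred1 j)) ?big_pred1_eq // => i; rewrite /= (inj_eq es.1).
Qed.

Lemma sum_fibre_out (F : 'I_k.+2 -> RR) t : t \notin s -> \sum_(i < k.+2 | e i == t) F i = 0.
Proof.
move=> ts; rewrite big_pred0 // => i; apply/eqP => eit.
by move/negP: ts; apply; apply/es.2; exists i.
Qed.

Lemma sum_enumerated (a : 'rV[RR]_m) : (forall t, t \notin s -> a ord0 t = 0) ->
  \sum_(t < m) a ord0 t = \sum_(i < k.+2) a ord0 (e i).
Proof.
move=> a_out.
rewrite [RHS](eq_bigr (fun i => \sum_(t < m | e i == t) a ord0 t)); last first.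
  by move=> i _; rewrite (eq_bigl (pred1 (e i))) ?big_pred1_eq // => t; rewrite /= eq_sym.
rewrite [RHS](exchange_big_dep xpredT) //=; apply: eq_bigr => t _.
have [ts|ts] := boolP (t \in s); last by rewrite sum_fibre_out // a_out.
have [j <-] := (es.2 t).1 ts.
by rewrite (sum_fibre_inj (fun=> a ord0 (e j))).
Qed.

Lemma zero_sum_lift_chart a i :
  simplex s a -> zero_sum_lift (centred_chart a) i = a ord0 (e i) - bary k.
Proof.
move=> [_ [a1 sub]].
have sum_e : \sum_(i < k.+2) a ord0 (e i) = 1.
  by rewrite -sum_enumerated // => t; exact: row_support_out.
case: (ord_widen_or_max i) => [[j ->]|->]; first by rewrite zero_sum_lift_widen mxE.
rewrite zero_sum_lift_max; under eq_bigr do rewrite mxE.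
rewrite sumrB sumr_const card_ord; rewrite big_ord_recr /= in sum_e.
have := natr_bary k; rewrite mulrS mulr_natl; lra.
Qed.

Lemma simplex_gauge_chart_le a : simplex s a -> simplex_gauge (centred_chart a) <= bary k.
Proof.
move=> sa; have [a0 _] := sa.
case: (simplex_gauge_attained (centred_chart a)) => [->|[i ->]].
  exact: ltW (bary_gt0 k).
by rewrite zero_sum_lift_chart //; have := a0 (e i); lra.
Qed.

Lemma radial_ge0 a : 0 <= radial a.
Proof. by rewrite mulr_ge0 // simplex_gauge_ge0. Qed.

Lemma radial_le1 a : simplex s a -> radial a <= 1.
Proof.
move=> /simplex_gauge_chart_le le; rewrite /radial -[leRHS](natr_bary k).
by rewrite ler_pM2l ?ltr0n.
Qed.

Lemma simplex_gauge_chart_boundary a :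
  simplex_boundary s a -> simplex_gauge (centred_chart a) = bary k.
Proof.
move=> [sa ns]; have [_ [_ sub]] := sa.
have : ~~ (s \subset row_support a).
  by apply: contra ns => h; rewrite finset.eqEsubset sub h.
case/subsetPn => t ts; rewrite inE negbK => /eqP at0.
have [j ejt] := (es.2 t).1 ts.
have := simplex_gauge_ge (centred_chart a) j.
rewrite zero_sum_lift_chart // ejt at0 sub0r opprK => g_ge.
by apply: le_anti; rewrite simplex_gauge_chart_le ?g_ge.
Qed.

Lemma radial_boundary a : simplex_boundary s a -> radial a = 1.
Proof. by move=> /simplex_gauge_chart_boundary g_bary; rewrite /radial g_bary natr_bary. Qed.

Lemma centred_chart_neq0 a : 0 < radial a -> centred_chart a != 0.
Proof. by apply: contraTneq; rewrite /radial => ->; rewrite simplex_gauge0 mulr0 ltxx. Qed.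

Lemma sphere_chart_unit a : 0 < radial a -> unit_sphere k (sphere_chart a).
Proof. by move=> /centred_chart_neq0; exact: unit_sphere_normalize. Qed.

Lemma sphere_to_boundary_vertex v j :
  sphere_to_boundary v ord0 (e j) = bary k + bary k * zero_sum_lift v j / simplex_gauge v.
Proof. by rewrite mxE (sum_fibre_inj (fun i => _ + _ * zero_sum_lift v i / _)). Qed.

Lemma sphere_to_boundary_out v t : t \notin s -> sphere_to_boundary v ord0 t = 0.
Proof. by move=> ts; rewrite mxE sum_fibre_out. Qed.

Lemma sphere_to_boundaryP v : unit_sphere k v -> simplex_boundary s (sphere_to_boundary v).
Proof.
move=> /unit_sphere_neq0 /simplex_gauge_gt0 g_gt0.
have b_gt0 := bary_gt0 k.
have vertexE j : sphere_to_boundary v ord0 (e j) =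
    bary k * (simplex_gauge v + zero_sum_lift v j) / simplex_gauge v.
  by rewrite sphere_to_boundary_vertex; field; rewrite gt_eqF.
have sub : row_support (sphere_to_boundary v) \subset s.
  apply/fintype.subsetP => t; rewrite inE; apply: contraR => ts.
  by rewrite sphere_to_boundary_out.
split; [split; [|split]|].
- move=> t; have [ts|ts] := boolP (t \in s); last by rewrite sphere_to_boundary_out.
  have [j <-] := (es.2 t).1 ts.
  rewrite vertexE divr_ge0 ?mulr_ge0 ?(ltW b_gt0) ?(ltW g_gt0) //.
  by have := simplex_gauge_ge v j; lra.
- rewrite (sum_enumerated _ (sphere_to_boundary_out v)).
  under eq_bigr do rewrite sphere_to_boundary_vertex.
  rewrite big_split /= sumr_const card_ord.
  under eq_bigr do rewrite mulrAC.
  by rewrite -mulr_sumr sum_zero_sum_lift mulr0 addr0 -mulr_natl natr_bary.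
- exact: sub.
- case: (simplex_gauge_attained v) => [g0|[i gi]]; first by move: g_gt0; rewrite g0 ltxx.
  apply: contraTneq isT => hs.
  have : e i \in row_support (sphere_to_boundary v) by rewrite hs; apply/es.2; exists i.
  rewrite inE sphere_to_boundary_vertex gi.
  have li : zero_sum_lift v i != 0.
    by apply: contraTneq g_gt0 => li; rewrite gi li oppr0 ltxx.
  by rewrite invrN mulrN mulfK // subrr eqxx.
Qed.

Lemma sphere_chartK a : simplex_boundary s a -> sphere_to_boundary (sphere_chart a) = a.
Proof.
move=> ba; have [sa _] := ba.
have c0 : centred_chart a != 0 by apply: centred_chart_neq0; rewrite radial_boundary.
have g_bary := simplex_gauge_chart_boundary ba.
have n_gt0 := euclid_norm_gt0 _ c0.
apply/rowP => t; have [ts|ts] := boolP (t \in s); last first.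
  by rewrite sphere_to_boundary_out // (row_support_out _ sa.2.2 ts).
have [j <-] := (es.2 t).1 ts.
rewrite sphere_to_boundary_vertex /sphere_chart zero_sum_liftZ simplex_gaugeZ; last first.
  by rewrite invr_ge0 ltW.
rewrite g_bary zero_sum_lift_chart //.
by have := bary_gt0 k => b_gt0; field; rewrite ?gt_eqF.
Qed.

Lemma continuous_centred_chart : continuous centred_chart.
Proof.
move=> a; apply: continuous_row_at => j.
by apply: (@continuousB _ RR^o); [exact: coord_continuous|exact: cst_continuous].
Qed.

Lemma continuous_radial : continuous radial.
Proof.
move=> a; have cg := continuous_comp (@continuous_centred_chart a)
  (@continuous_simplex_gauge k (centred_chart a)).
exact: (@cvgM RR _ _ _ (fun=> (k.+2)%:R) (fun a => simplex_gauge (centred_chart a)) _ _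
  (cvg_cst _) cg).
Qed.

Lemma sphere_chart_continuous_at a : 0 < radial a -> {for a, continuous sphere_chart}.
Proof.
move=> /centred_chart_neq0 /euclid_norm_gt0 /lt0r_neq0 n0.
apply: continuousZ; last exact: continuous_centred_chart.
apply: continuousV => //.
exact: continuous_comp (@continuous_centred_chart a)
  (@continuous_euclid_norm _ (centred_chart a)).
Qed.

Lemma sphere_to_boundary_continuous_at v : v != 0 -> {for v, continuous sphere_to_boundary}.
Proof.
move=> /simplex_gauge_gt0 /lt0r_neq0 g0.
have c_i i : {for v, continuous (fun w => bary k + bary k * zero_sum_lift w i / simplex_gauge w)}.
  apply: (@continuousD _ RR^o); first exact: cst_continuous.
  apply: continuousM; last exact: continuousV g0 (@continuous_simplex_gauge k v).
  by apply: continuousM; [exact: cst_continuous|exact: continuous_zero_sum_lift].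
apply: continuous_row_at => t.
by apply: cvg_big => [||i _]; [exact: (@add_continuous RR^o)|exact: nbhs_filter|exact: c_i].
Qed.

End barycentric_chart.

Definition spheres_nullhomotopic {Y : topologicalType} k (A B : set Y) : Prop :=
  forall f : 'rV[RR]_k.+1 -> Y, {within unit_sphere k, continuous f} ->
  f @` unit_sphere k `<=` A -> nullhomotopic_in k B f.

Definition simplex_extendable {Y : topologicalType} m (s : {set 'I_m}) (A B : set Y) : Prop :=
  forall g : 'rV[RR]_m -> Y, {within simplex_boundary s, continuous g} ->
  g @` simplex_boundary s `<=` A ->
  exists h : 'rV[RR]_m -> Y, {within simplex s, continuous h} /\
    h @` simplex s `<=` B /\ (forall a, simplex_boundary s a -> h a = g a).

Section cone_extension.
Context {Y : topologicalType}.
Variables (m k : nat) (e : 'I_k.+2 -> 'I_m) (s : {set 'I_m}).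
Hypothesis es : enumerates e s.
Variables (H : RR * 'rV[RR]_k.+1 -> Y) (c : Y).
Hypothesis cH : {within unit_interval `*` unit_sphere k, continuous H}.
Hypothesis H1 : forall v, unit_sphere k v -> H (1, v) = c.

(* The inner half of the simplex is sent to the end point [c] of the homotopy
   [H], the outer half runs [H] backwards from the boundary. *)
Definition cone_extension (a : 'rV[RR]_m) : Y :=
  if radial e a <= 2^-1 then c else H (2 * (1 - radial e a), sphere_chart e a).

Lemma cone_parameter a : simplex s a -> 2^-1 <= radial e a ->
  (unit_interval `*` unit_sphere k) (2 * (1 - radial e a), sphere_chart e a).
Proof.
move=> sa ha; have := radial_ge0 e a; have := radial_le1 es sa.
split; first by rewrite /unit_interval /=; apply/andP; split; lra.
by apply: sphere_chart_unit; apply: lt_le_trans ha; rewrite invr_gt0 ltr0n.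
Qed.

Lemma cone_extension_continuous : {within simplex s, continuous cone_extension}.
Proof.
pose inner := simplex s `&` [set a | radial e a <= 2^-1].
pose outer := simplex s `&` [set a | 2^-1 <= radial e a].
have closed_radial (C : set RR) : closed C -> closed (radial e @^-1` C).
  by move: C; apply/continuous_closedP; exact: continuous_radial.
have c_inner : {within inner, continuous cone_extension}.
  apply: (subspace_eq_continuous (f := fun=> c)).
    by move=> a; rewrite inE /inner => -[_ ha]; rewrite /from_subspace /cone_extension ha.
  by apply: continuous_subspaceT; exact: cst_continuous.
have c_outer : {within outer, continuous cone_extension}.
  pose p a := (2 * (1 - radial e a), sphere_chart e a).
  have cp : {within outer, continuous p}.
    apply: continuous_in_subspaceT => a; rewrite inE /outer => -[_ ha].
    have c1 : {for a, continuous (fun a => 2 * (1 - radial e a))}.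
      exact: (@cvgM RR _ _ _ (fun=> 2) (fun a => 1 - radial e a) _ _ (cvg_cst _)
        (@cvgB RR RR^o _ _ _ (fun=> 1) (radial e) _ _ (cvg_cst _) (@continuous_radial _ _ e a))).
    have c2 : {for a, continuous (sphere_chart e)}.
      by apply: sphere_chart_continuous_at; apply: lt_le_trans ha; rewrite invr_gt0 ltr0n.
    exact: cvg_pair c1 c2.
  apply: (subspace_eq_continuous (f := H \o p)); last first.
    by apply: (within_continuous_comp cp _ cH) => a [sa ha]; exact: cone_parameter.
  move=> a; rewrite inE /outer => -[sa ha]; rewrite /from_subspace /cone_extension /p /=.
  case: ifP => // hle.
  have -> : radial e a = 2^-1 by apply: le_anti; rewrite hle ha.
  by rewrite (_ : 2 * (1 - 2^-1) = 1) ?H1 //; [exact: (cone_parameter sa ha).2|field].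
apply: (continuous_subspaceW (B := inner `|` outer)).
  by move=> a sa; case: (leP (radial e a) 2^-1) => ha; [left|right; split=> //; exact: ltW].
apply: withinU_continuous => //; apply: closedI; try exact: closed_simplex.
  exact: closed_radial (@closed_le _ _).
exact: closed_radial (@closed_ge _ _).
Qed.

Lemma cone_extension_image (B : set Y) :
  H @` (unit_interval `*` unit_sphere k) `<=` B -> B c -> cone_extension @` simplex s `<=` B.
Proof.
move=> HB Bc _ [a sa <-]; rewrite /cone_extension; case: ifP => // /negbT.
by rewrite -ltNge => ha; apply: HB; eexists; first exact: cone_parameter sa (ltW ha).
Qed.

Lemma cone_extension_boundary a :
  simplex_boundary s a -> cone_extension a = H (0, sphere_chart e a).
Proof.
move=> ba; rewrite /cone_extension (radial_boundary es ba) subrr mulr0.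
by rewrite ifN // -ltNge invf_lt1 ?ltr1n ?ltr0n.
Qed.

End cone_extension.

Lemma simplex_extendable_card (Y : topologicalType) m k (s : {set 'I_m}) (A B : set Y) :
  #|s| = k.+2 -> spheres_nullhomotopic k A B -> simplex_extendable s A B.
Proof.
move=> /enumerates_card [e es] null g cg gA.
have maps_bd v : unit_sphere k v -> simplex_boundary s (sphere_to_boundary e v).
  exact: sphere_to_boundaryP.
have cf : {within unit_sphere k, continuous (g \o sphere_to_boundary e)}.
  apply: (within_continuous_comp _ maps_bd cg); apply: continuous_in_subspaceT.
  by move=> v /set_mem /unit_sphere_neq0; exact: sphere_to_boundary_continuous_at.
have [|H [c [cH [HB Hend]]]] := null _ cf.
  by move=> _ [v sv <-]; apply: gA; exists (sphere_to_boundary e v) => //; exact: maps_bd.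
have H1 v : unit_sphere k v -> H (1, v) = c by move=> /Hend [].
have Bc : B c.
  rewrite -(H1 _ (unit_sphere_delta k)); apply: HB; eexists => //.
  by split; [rewrite /unit_interval /= ler01 lexx|exact: unit_sphere_delta].
exists (cone_extension e H c); split; first exact: cone_extension_continuous.
split; first exact: cone_extension_image.
move=> a ba; have r_gt0 : 0 < radial e a by rewrite (radial_boundary es ba) ltr01.
rewrite (cone_extension_boundary es _ _ ba).
have [-> _] := Hend _ (sphere_chart_unit e a r_gt0).
by rewrite /= (sphere_chartK es ba).
Qed.

Lemma simplex_boundary1 m (t : 'I_m) : simplex_boundary [set t] `<=` set0.
Proof.
move=> a [[_ [a1 sub]] ns].
have /set0Pn [u uin] := row_support_neq0 _ a1.
move/negP: ns; apply; rewrite finset.eqEsubset sub /=.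
by apply/fintype.subsetP => v /set1P ->; have /set1P <- := fintype.subsetP sub u uin.
Qed.

Lemma simplex_extendable_vertex (Y : topologicalType) m (s : {set 'I_m}) (A B : set Y) :
  #|s| = 1%N -> B !=set0 -> simplex_extendable s A B.
Proof.
move=> /eqP /cards1P [t ->] [b Bb] g _ _; exists (fun=> b); split.
  by apply: continuous_subspaceT; exact: cst_continuous.
by split=> [_ [? _ <-] //|a /simplex_boundary1 []].
Qed.

Lemma realization_simplices m (K : {set {set 'I_m}}) : simplicial_complex K ->
  realization K = \bigcup_(t in [set t : {set 'I_m} | t \in K]) simplex t.
Proof.
move=> cK; apply/seteqP; split=> [a [a0 [a1 aK]]|a [t tK [a0 [a1 sub]]]].
  by exists (row_support a).
by split=> //; split=> //; exact: cK tK sub.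
Qed.

Lemma closed_realization m (K : {set {set 'I_m}}) : simplicial_complex K -> closed (realization K).
Proof.
move=> cK; rewrite realization_simplices //; apply: closed_bigcup; first exact: finite_finset.
by move=> t _; exact: closed_simplex.
Qed.

Lemma realization_setU m (L K : {set {set 'I_m}}) :
  realization (L :|: K) = realization L `|` realization K.
Proof.
apply/seteqP; split=> [a [a0 [a1]]|a [[a0 [a1 aL]]|[a0 [a1 aK]]]].
  by rewrite inE => /orP [aL|aK]; [left|right].
all: by split=> //; split=> //; rewrite inE ?aL ?aK ?orbT.
Qed.

Lemma realization_subset m (L K : {set {set 'I_m}}) :
  L \subset K -> realization L `<=` realization K.
Proof. by move=> LK a [a0 [a1 aL]]; split=> //; split=> //; exact: (fintype.subsetP LK). Qed.

Lemma realization_boundary m (L : {set {set 'I_m}}) (s : {set 'I_m}) :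
  (forall t : {set 'I_m}, t \proper s -> t \in L) -> simplex_boundary s `<=` realization L.
Proof.
move=> hp a [[a0 [a1 sub]] ns]; split=> //; split=> //.
by apply: hp; rewrite finset.properEneq ns sub.
Qed.

Lemma realization_setU1 m (L : {set {set 'I_m}}) (s : {set 'I_m}) :
  (forall t : {set 'I_m}, t \proper s -> t \in L) ->
  realization (s |: L) = realization L `|` simplex s.
Proof.
move=> hp; apply/seteqP; split=> [a [a0 [a1]]|a [aL|sa]].
- rewrite !inE => /orP [/eqP sa|aL]; last by left.
  by right; split=> //; split=> //; apply/fintype.subsetP => i; rewrite -sa.
- by apply: realization_subset aL; exact: finset.subsetUr.
- have [a0 [a1 sub]] := sa; split=> //; split=> //; rewrite -/(row_support a) !inE.
  have [//|ns] := eqVneq (row_support a) s.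
  by rewrite hp // finset.properEneq ns sub.
Qed.

Definition extension_into {Y : topologicalType} m (K L : {set {set 'I_m}}) (B : set Y)
    (g : 'rV[RR]_m -> Y) : Prop :=
  exists h : 'rV[RR]_m -> Y, {within realization K, continuous h} /\
    h @` realization K `<=` B /\ (forall a, realization L a -> h a = g a).

Lemma extension_into_trans (Y : topologicalType) m (K M L : {set {set 'I_m}}) (B : set Y) g g' :
  L \subset M -> (forall a, realization L a -> g' a = g a) ->
  extension_into K M B g' -> extension_into K L B g.
Proof.
move=> LM g'g [h [ch [hB hg']]]; exists h; split=> //; split=> // a aL.
by rewrite hg' ?g'g //; exact: realization_subset aL.
Qed.

Lemma extend_over_simplex (Y : topologicalType) m (L : {set {set 'I_m}}) (s : {set 'I_m})
    (A B : set Y) g :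
  simplex_extendable s A B -> simplicial_complex L ->
  (forall t : {set 'I_m}, t \proper s -> t \in L) -> s \notin L ->
  {within realization L, continuous g} -> g @` realization L `<=` B ->
  g @` simplex_boundary s `<=` A -> extension_into (s |: L) L B g.
Proof.
move=> ext cL hp sL cg gB gA.
have [h [ch [hB hg]]] := ext g (continuous_subspaceW (realization_boundary hp) cg) gA.
have not_s a : realization L a -> row_support a != s.
  by move=> [_ [_ aL]]; apply: contraNneq sL => <-.
exists (fun a => if row_support a == s then h a else g a); split; [|split].
- rewrite realization_setU1 //; apply: withinU_continuous.
  + exact: closed_realization.
  + exact: closed_simplex.
  + apply: subspace_eq_continuous cg => a; rewrite inE => aL.
    by rewrite /from_subspace ifN // not_s.
  + apply: subspace_eq_continuous ch => a; rewrite inE => sa.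
    by rewrite /from_subspace; case: eqP => // /eqP ns; apply: hg.
- rewrite realization_setU1 // => _ [a [aL|sa] <-].
    by rewrite ifN ?not_s //; apply: gB; exists a.
  case: eqP => [_|/eqP ns]; first by apply: hB; exists a.
  by apply: gB; exists a => //; apply: (realization_boundary hp).
- by move=> a aL; rewrite ifN ?not_s.
Qed.

Lemma extend_over_faces (Y : topologicalType) m (K : {set {set 'I_m}}) c (A B : set Y) :
  (forall s : {set 'I_m}, #|s| = c.+1 -> simplex_extendable s A B) ->
  forall L, simplicial_complex L -> L \subset K ->
  (forall s, s \in K -> s \notin L ->
     #|s| = c.+1 /\ forall t : {set 'I_m}, t \proper s -> t \in L) ->
  forall g, {within realization L, continuous g} -> g @` realization L `<=` B ->
  (forall s, s \in K -> s \notin L -> g @` simplex_boundary s `<=` A) ->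
  extension_into K L B g.
Proof.
move=> ext L; move Nd: #|K :\: L| => N.
elim: N L Nd => [|N IH] L Nd cL LK hKL g cg gB gA.
  have -> : K = L.
    apply/eqP; rewrite finset.eqEsubset LK andbT -finset.setD_eq0.
    by rewrite (cards0_eq Nd).
  by exists g.
have [s sKL] : exists s, s \in K :\: L by apply/set0Pn; rewrite -card_gt0 Nd.
move: (sKL); rewrite inE => /andP [sL sK].
have [hs hp] := hKL s sK sL.
have [g' [cg' [g'B g'g]]] := extend_over_simplex (ext s hs) cL hp sL cg gB (gA s sK sL).
apply: (extension_into_trans (M := s |: L) g _ g'g); first exact: finset.subsetUr.
apply: (IH (s |: L)) => //.
- have -> : K :\: (s |: L) = (K :\: L) :\ s.
    by apply/setP => t; rewrite !inE; case: (t == s); case: (t \in L).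
  by move: Nd; rewrite (cardsD1 s) sKL add1n => -[].
- move=> u t; rewrite !inE => /orP [/eqP ->|uL] tu; last by rewrite (cL u t uL tu) orbT.
  by have [->|ts] := eqVneq t s; rewrite ?eqxx // hp ?orbT // finset.properEneq ts tu.
- by rewrite finset.subUset finset.sub1set sK LK.
- move=> s' s'K; rewrite !inE negb_or => /andP [_ s'L].
  have [h1 h2] := hKL s' s'K s'L; split=> // t ts.
  by rewrite !inE h2 ?orbT.
- move=> s' s'K; rewrite !inE negb_or => /andP [_ s'L] _ [a ba <-].
  rewrite g'g; last exact: realization_boundary (hKL s' s'K s'L).2 _ ba.
  by apply: (gA s' s'K s'L); exists a.
Qed.

(* [polyhedrally_n_connected n] is [polyhedral_extension n.+1]: bounding the
   number of vertices of the faces lets the induction start at the empty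
   complex. *)
Definition polyhedral_extension {Y : topologicalType} c (A B : set Y) : Prop :=
  forall m (K L : {set {set 'I_m}}),
    simplicial_complex K -> (forall s, s \in K -> (#|s| <= c)%N) ->
    simplicial_complex L -> L \subset K ->
  forall g : 'rV[RR]_m -> Y, {within realization L, continuous g} ->
    g @` realization L `<=` A -> extension_into K L B g.

Lemma polyhedral_extension0 (Y : topologicalType) (A B : set Y) : polyhedral_extension 0 A B.
Proof.
move=> m K L _ dK _ _ g _ _.
have K0 : realization K `<=` set0.
  move=> a [_ [a1 aK]]; move: (dK _ aK); rewrite leqn0 cards_eq0.
  by move/negP: (row_support_neq0 _ a1).
exists g; split.
  by apply: (continuous_subspaceW K0); exact: continuous_subspace0.
by split=> // _ [a /K0 []].
Qed.

Lemma extension_into_setU (Y : topologicalType) m (L M : {set {set 'I_m}}) (D : set Y) g h :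
  simplicial_complex L -> simplicial_complex M ->
  {within realization L, continuous g} -> g @` realization L `<=` D ->
  {within realization M, continuous h} -> h @` realization M `<=` D ->
  (forall a, realization (L :&: M) a -> h a = g a) -> extension_into (L :|: M) L D g.
Proof.
move=> cL cM cg gD ch hD hg.
have hg' a : realization M a -> row_support a \in L -> h a = g a.
  by move=> [a0 [a1 aM]] aL; apply: hg; split=> //; split=> //; rewrite inE aL.
exists (fun a => if row_support a \in L then g a else h a); split; [|split].
- rewrite realization_setU; apply: withinU_continuous; try exact: closed_realization.
    apply: subspace_eq_continuous cg => a; rewrite inE => -[_ [_ aL]].
    by rewrite /from_subspace -/(row_support a) aL.
  apply: subspace_eq_continuous ch => a; rewrite inE => aM.
  by rewrite /from_subspace; case: ifP => // /(hg' a aM).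
- rewrite realization_setU => _ [a [aL|aM] <-]; case: ifP => aL'.
  + by apply: gD; exists a.
  + by move: aL'; case: aL => _ [_ ->].
  + by rewrite -hg' //; apply: hD; exists a.
  + by apply: hD; exists a.
- by move=> a [_ [_ aL]]; rewrite -/(row_support a) aL.
Qed.

Lemma polyhedral_extension_succ (Y : topologicalType) c (A B C D : set Y) :
  (forall m (s : {set 'I_m}), #|s| = c.+1 -> simplex_extendable s A B) ->
  C `<=` D -> D `<=` A `&` B -> polyhedral_extension c C D ->
  polyhedral_extension c.+1 C B.
Proof.
move=> ext CD DAB extD m K L cK dK cL LK g cg gC.
pose Kc := [set t in K | (#|t| <= c)%N].
have cKc : simplicial_complex Kc.
  move=> u t; rewrite !inE => /andP [uK uc] tu; rewrite (cK u t uK tu).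
  exact: leq_trans (subset_leq_card tu) uc.
have cLc : simplicial_complex (L :&: Kc).
  move=> u t; rewrite finset.in_setI => /andP [uL uKc] tu.
  by rewrite finset.in_setI (cL u t uL tu) (cKc u t uKc tu).
have sub_L : realization (L :&: Kc) `<=` realization L.
  by apply: realization_subset; exact: subsetIl.
have [|h [ch [hD hg]]] := extD m Kc (L :&: Kc) cKc _ cLc (subsetIr _ _) g
  (continuous_subspaceW sub_L cg) (subset_trans (image_subset _ sub_L) gC).
  by move=> s; rewrite inE => /andP [].
have gD : g @` realization L `<=` D by move=> y /gC /CD.
have [g2 [cg2 [g2D g2g]]] := extension_into_setU cL cKc cg gD ch hD hg.
apply: (extension_into_trans (M := L :|: Kc) g _ g2g); first exact: finset.subsetUl.
have top_faces s : s \in K -> s \notin L :|: Kc ->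
    #|s| = c.+1 /\ forall t : {set 'I_m}, t \proper s -> t \in L :|: Kc.
  move=> sK; rewrite !inE negb_or sK /= => /andP [_ sc].
  have hs : #|s| = c.+1 by apply/eqP; rewrite eqn_leq dK //= ltnNge.
  split=> // t ts; rewrite !inE (cK s t sK (proper_sub ts)) /=.
  by rewrite -ltnS -hs proper_card ?orbT.
apply: (extend_over_faces (ext m)) => //.
- move=> u t; rewrite !inE => /orP [uL|/andP [uK uc]] tu; first by rewrite (cL u t uL tu).
  by rewrite (cK u t uK tu) (leq_trans (subset_leq_card tu) uc) orbT.
- by rewrite finset.subUset LK; apply/fintype.subsetP => t; rewrite inE => /andP [].
- by move=> y /g2D /DAB [].
- move=> s sK sL _ [a ba <-].
  have ra : realization (L :|: Kc) a by exact: realization_boundary (top_faces s sK sL).2 _ ba.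
  by have [] : (A `&` B) (g2 a) by apply/DAB/g2D; exists a.
Qed.

Lemma lower_n_continuous_extension (X Y : topologicalType) n (F : X -> set Y)
    {x : X} {y : Y} {c : nat} {V : set Y} :
  lower_n_continuous n F -> F x y -> (c <= n.+1)%N -> nbhs y V ->
  exists (W : set Y) (U : set X), nbhs y W /\ nbhs x U /\ W `<=` V /\
    forall x', U x' -> polyhedral_extension c (W `&` F x') (V `&` F x').
Proof.
move=> hF Fxy; elim: c V => [V _ hV|c IH V cn hV].
  exists V, setT; split=> //; split; first exact: filterT.
  by split=> // x' _; exact: polyhedral_extension0.
have [W1 [U1 [hW1 [hU1 low]]]] := hF x y Fxy V hV.
have [W [U2 [hW [hU2 [WW1V extW]]]]] := IH (W1 `&` V) (ltnW cn) (filterI hW1 hV).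
exists W, (U1 `&` U2); do 2!split=> //; first exact: filterI.
split=> [z /WW1V [] //|x' [/low [VF0 spheres] /extW ext]].
apply: (polyhedral_extension_succ (A := W1 `&` F x') _ _ _ ext).
- move=> m s; case: c cn {IH ext extW} => [_|k kn] hs.
    exact: simplex_extendable_vertex hs VF0.
  by apply: simplex_extendable_card hs _; apply: spheres.
- by move=> z [/WW1V [w1 v] f].
- by move=> z [[w1 v] f].
Qed.

Unset Implicit Arguments.

Theorem mainTheorem3 (X Y : topologicalType) (n : nat) (F : X -> set Y) :
  lower_n_continuous n F -> lower_polyhedrally_n_continuous n F.
Proof.
move=> hF x y Fxy V hV.
have [W [U [hW [hU [_ ext]]]]] := lower_n_continuous_extension hF Fxy (leqnn n.+1) hV.
by exists W, U.
Qed.
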